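(* Suppose given an exact triangle of $\mathcal S$-complexes consisting of $\widetilde C_i$, $\widetilde\lambda_i$, $\widetilde K_i$ for $i\in\mathbb Z/3$. Then there are $\mathcal S$-chain homotopy equivalences $\widetilde C_0\simeq\mathrm{Cone}(\widetilde\lambda_2)[1]$, $\widetilde C_1\simeq\mathrm{Cone}(\widetilde\lambda_0)$ and $\widetilde C_2\simeq\mathrm{Cone}(\widetilde\lambda_1)$.
   Context: Let $R$ be a commutative ring; graded modules are $\mathbb Z$-graded, $V[i]_j=V_{i+j}$, differentials have degree $-1$. An $\mathcal S$-complex over $R$ is a chain complex $(\widetilde C,\widetilde d)$ of finitely generated free graded $R$-modules with a graded decomposition $\widetilde C=C\oplus C[-1]\oplus\mathsf R$ in which $\widetilde d=\begin{pmatrix} d&0&0\\ v&-d&\delta_2\\ \delta_1&0&r\end{pmatrix}$; $\chi$ denotes the degree $1$ map sending $C$ identically onto $C[-1]$ and zero on $C[-1]\oplus\mathsf R$. A degree $k$ morphism $\widetilde C\to\widetilde C'$ is a degree $k$ map $\widetilde\lambda$ with $\chi'\widetilde\lambda=\widetilde\lambda\chi$ (equivalently of the form $\begin{pmatrix}\lambda&0&0\\ \mu&\lambda&\Delta_2\\ \Delta_1&0&\rho\end{pmatrix}$) and $\widetilde d'\widetilde\lambda-\widetilde\lambda\widetilde d=0$; a morphism is a degree $0$ morphism. An $\mathcal S$-chain homotopy between morphisms $\widetilde\lambda,\widetilde\lambda'$ is a map $\widetilde K$ with $\chi'\widetilde K+\widetilde K\chi=0$ (equivalently of the form $\begin{pmatrix}K&0&0\\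 L&-K&M_2\\ M_1&0&J\end{pmatrix}$) and $\widetilde d'\widetilde K+\widetilde K\widetilde d=\widetilde\lambda-\widetilde\lambda'$; $\simeq$ denotes $\mathcal S$-chain homotopy equivalence (a pair of morphisms whose composites are $\mathcal S$-chain homotopic to identities). An exact triangle of $\mathcal S$-complexes consists of, for each $i\in\mathbb Z/3$: an $\mathcal S$-complex $(\widetilde C_i,\widetilde d_i,\chi_i)$; a morphism $\widetilde\lambda_i:\widetilde C_i\to\widetilde C_{i-1}$ of degree $0$ for $i=0,2$ and of degree $-1$ for $i=1$; and a homogeneous map $\widetilde K_i:\widetilde C_i\to\widetilde C_{i-2}$ of the form $\begin{pmatrix}K&0&0\\ L&-K&M_2\\ M_1&0&J\end{pmatrix}$ with $\widetilde d_{i-2}\widetilde K_i+\widetilde K_i\widetilde d_i+\widetilde\lambda_{i-1}\widetilde\lambda_i=0$; such that for each $i$ the map $\widetilde\lambda_{i-2}\widetilde K_i-\widetilde K_{i-1}\widetilde\lambda_i$, regarded as a morphism $(\widetilde C_i,\widetilde d_i,\chi_i)\to(\widetilde C_i,-\widetilde d_i,-\chi_i)$, is $\mathcal S$-chain homotopy equivalent (i.e. $\mathcal S$-chain homotopic) to an isomorphism. For a degree $k$ morphism $\widetilde\lambda:\widetilde C\to\widetilde C'$, $\mathrm{Cone}(\widetilde\lambda)$ is the $\mathcal S$-complex with underlying module $\widetilde C[-1-k]\oplus\widetilde C'$, differential $\begin{pmatrix}-\widetilde d&0\\ \widetilde\lambda&\widetilde d'\end{pmatrix}$ and $\chi$-map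 $\begin{pmatrix}-\chi&0\\0&\chi'\end{pmatrix}$. For an $\mathcal S$-complex $\widetilde C$, $\widetilde C[1]$ denotes the $\mathcal S$-complex with underlying graded module $\widetilde C[1]$ and the same differential and $\chi$-map. *)

From HB Require Import structures.
From mathcomp Require Import all_boot all_order all_algebra.
Unset Strict Implicit. Unset Printing Implicit Defensive.
Import Order.TTheory GRing.Theory Num.Theory.
Local Open Scope ring_scope.

(* A finitely generated free graded R-module is R^n with a homogeneous basis;
   [deg i] is the degree of the i-th basis vector.  Maps are matrices acting on
   column vectors: A : 'M_(m, n) is a map from the n-module to the m-module. *)

Definition homog {m n : nat} (dm : 'I_m -> int) (dn : 'I_n -> int) (k : int)
  {R : comPzRingType} (A : 'M[R]_(m, n)) : Prop :=
  forall i j, A i j != 0 -> dm i = dn j + k.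

Unset Implicit Arguments.
Record cx (R : comPzRingType) := Cx {
  cn : nat; cdeg : 'I_cn -> int; cd : 'M[R]_cn; cchi : 'M[R]_cn }.

(* Data of an S-complex: C (rank n, degrees deg), blocks d, v, delta1, delta2, r,
   the underlying module being C ⊕ C[-1] ⊕ R. *)
Record Sdata (R : comPzRingType) := Sd {
  sn : nat; sdeg : 'I_sn -> int;
  sd : 'M[R]_sn; sv : 'M[R]_sn;
  sdel1 : 'M[R]_(1, sn); sdel2 : 'M[R]_(sn, 1); sr : 'M[R]_1 }.

Arguments Cx {R}.
Arguments cn {R}. Arguments cdeg {R}. Arguments cd {R}. Arguments cchi {R}.
Arguments sn {R}. Arguments sdeg {R}. Arguments sd {R}. Arguments sv {R}.
Arguments sdel1 {R}. Arguments sdel2 {R}. Arguments sr {R}.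


(* degrees of C ⊕ C[-1] ⊕ R  (V[i]_j = V_{i+j}, so C[-1] raises degrees by 1,
   and R sits in degree 0) *)
Definition Sdegs (n : nat) (deg : 'I_n -> int) (i : 'I_(n + n + 1)) : int :=
  match split i with
  | inl j => match split j with inl a => deg a | inr a => deg a + 1 end
  | inr _ => 0
  end.

Definition toCx {R : comPzRingType} (S : Sdata R) : cx R :=
  @Cx R (sn S + sn S + 1) (@Sdegs (sn S) (sdeg S))
    (block_mx (block_mx (sd S) 0 (sv S) (- sd S)) (col_mx 0 (sdel2 S))
              (row_mx (sdel1 S) 0) (sr S))
    (block_mx (block_mx 0 0 1%:M 0) 0 0 0).

Definition Scomplex {R : comPzRingType} (S : Sdata R) : Prop :=
  homog (cdeg (toCx S)) (cdeg (toCx S)) (-1) (cd (toCx S)) /\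
  cd (toCx S) *m cd (toCx S) = 0.

Definition morph {R : comPzRingType} (C C' : cx R) (k : int)
  (L : 'M[R]_(cn C', cn C)) : Prop :=
  [/\ homog (cdeg C') (cdeg C) k L,
      cchi C' *m L = L *m cchi C &
      cd C' *m L - L *m cd C = 0].

Definition shtpy {R : comPzRingType} (C C' : cx R) (L L' K : 'M[R]_(cn C', cn C))
  : Prop :=
  [/\ homog (cdeg C') (cdeg C) 1 K,
      cchi C' *m K + K *m cchi C = 0 &
      cd C' *m K + K *m cd C = L - L'].

Definition sheq {R : comPzRingType} (C C' : cx R) : Prop :=
  exists (f : 'M[R]_(cn C', cn C)) (g : 'M[R]_(cn C, cn C')),
    [/\ morph C C' 0 f, morph C' C 0 g,
        exists K, shtpy C C (g *m f) 1%:M K &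
        exists K, shtpy C' C' (f *m g) 1%:M K].

Definition invertible_mx {R : comPzRingType} {n : nat} (g : 'M[R]_n) : Prop :=
  exists h : 'M[R]_n, g *m h = 1%:M /\ h *m g = 1%:M.

Definition negcx {R : comPzRingType} (C : cx R) : cx R :=
  @Cx R (cn C) (cdeg C) (- cd C) (- cchi C).

Definition htpc_iso {R : comPzRingType} (C : cx R) (f : 'M[R]_(cn C)) : Prop :=
  morph C (negcx C) 0 f /\
  exists (g : 'M[R]_(cn C)) (K : 'M[R]_(cn C)),
    [/\ morph C (negcx C) 0 g, invertible_mx g & shtpy C (negcx C) f g K].

Definition shift1 {R : comPzRingType} (C : cx R) : cx R :=
  @Cx R (cn C) (fun i => cdeg C i - 1) (cd C) (cchi C).

(* Cone of a degree k morphism L : C -> C' ; module C[-1-k] ⊕ C' *)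
Definition cone {R : comPzRingType} (C C' : cx R) (k : int)
  (L : 'M[R]_(cn C', cn C)) : cx R :=
  @Cx R (cn C + cn C')
    (fun i => match split i with
              | inl a => cdeg C a + 1 + k
              | inr b => cdeg C' b end)
    (block_mx (- cd C) 0 L (cd C'))
    (block_mx (- cchi C) 0 0 (cchi C')).

From HB Require Import structures.
From mathcomp Require Import all_boot all_order all_algebra.
From mathcomp Require Import zify.
Import Order.TTheory GRing.Theory Num.Theory.
Local Open Scope ring_scope.
Set Implicit Arguments.

(* Rotate the triangle so that it reads X -a-> Y -mu-> Z -b-> X with homotopies
   KX : X -> Z, KY : Y -> X, KZ : Z -> Y, and regrade Cone(mu) so that
   Phi = eps_C (a, KX) : X -> Cone(mu) and Psi = (-KY, b) : Cone(mu) -> X are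
   morphisms, where eps = (-1)^deg.  Multiplying by eps turns maps
   (C, d, chi) -> (C, -d, -chi) into endomorphisms of C.  Then Psi Phi is
   eps_X (b KX - KY a), homotopic to an automorphism by exactness at X, and
   Phi Psi is eps_C (a, KX) (-KY, b): the homotopies at Y and Z assemble into a
   homotopy from (a, KX) (-KY, b) to a block lower triangular map whose diagonal
   blocks are the isomorphisms given by exactness at Y and Z.  A morphism whose
   composites both ways are homotopic to automorphisms is a homotopy
   equivalence.  The three claims are the three rotations of the triangle. *)

Lemma addr0_eqN {V : zmodType} {x y : V} : x + y = 0 -> x = - y.
Proof. by move/addr0_eq <-; rewrite opprK. Qed.

Section GradedMatrices.
Variable R : comPzRingType.

Lemma homog_conv m n (dm dm' : 'I_m -> int) (dn dn' : 'I_n -> int) (k k' : int)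
    (A : 'M[R]_(m, n)) :
  (forall i j, dm i = dn j + k -> dm' i = dn' j + k') ->
  homog dm dn k A -> homog dm' dn' k' A.
Proof. by move=> H hA i j /hA /H. Qed.

Lemma homog0 m n (dm : 'I_m -> int) (dn : 'I_n -> int) k :
  homog dm dn k (0 : 'M[R]_(m, n)).
Proof. by move=> i j; rewrite mxE eqxx. Qed.

Lemma homogD m n (dm : 'I_m -> int) (dn : 'I_n -> int) k (A B : 'M[R]_(m, n)) :
  homog dm dn k A -> homog dm dn k B -> homog dm dn k (A + B).
Proof.
move=> hA hB i j; rewrite mxE; have [Aij0|/hA//] := eqVneq (A i j) 0.
by rewrite Aij0 add0r => /hB.
Qed.

Lemma homogN m n (dm : 'I_m -> int) (dn : 'I_n -> int) k (A : 'M[R]_(m, n)) :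
  homog dm dn k A -> homog dm dn k (- A).
Proof. by move=> hA i j; rewrite mxE oppr_eq0 => /hA. Qed.

Lemma homogB m n (dm : 'I_m -> int) (dn : 'I_n -> int) k (A B : 'M[R]_(m, n)) :
  homog dm dn k A -> homog dm dn k B -> homog dm dn k (A - B).
Proof. by move=> hA /homogN; apply: homogD. Qed.

Lemma homogM m n p (dm : 'I_m -> int) (dn : 'I_n -> int) (dp : 'I_p -> int) k l
    (A : 'M[R]_(m, n)) (B : 'M[R]_(n, p)) :
  homog dm dn k A -> homog dn dp l B -> homog dm dp (l + k) (A *m B).
Proof.
move=> hA hB i j; rewrite mxE; apply: contraNeq => neq; apply/eqP.
rewrite big1 // => x _; have [->|/hA Ai] := eqVneq (A i x) 0; first by rewrite mul0r.
have [->|/hB Bx] := eqVneq (B x j) 0; first by rewrite mulr0.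
by case/eqP: neq; rewrite Ai Bx addrA.
Qed.

Lemma homog_col m1 m2 n (dm : 'I_(m1 + m2) -> int) (dn : 'I_n -> int) k
    (A1 : 'M[R]_(m1, n)) (A2 : 'M[R]_(m2, n)) :
  homog (dm \o lshift m2) dn k A1 -> homog (dm \o @rshift m1 m2) dn k A2 ->
  homog dm dn k (col_mx A1 A2).
Proof.
move=> h1 h2 i j; case: (split_ordP i) => i' ->.
  by rewrite col_mxEu; apply: h1.
by rewrite col_mxEd; apply: h2.
Qed.

Lemma homog_row m n1 n2 (dm : 'I_m -> int) (dn : 'I_(n1 + n2) -> int) k
    (A1 : 'M[R]_(m, n1)) (A2 : 'M[R]_(m, n2)) :
  homog dm (dn \o lshift n2) k A1 -> homog dm (dn \o @rshift n1 n2) k A2 ->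
  homog dm dn k (row_mx A1 A2).
Proof.
move=> h1 h2 i j; case: (split_ordP j) => j' ->.
  by rewrite row_mxEl; apply: h1.
by rewrite row_mxEr; apply: h2.
Qed.

Lemma homog_block m1 m2 n1 n2 (dm : 'I_(m1 + m2) -> int) (dn : 'I_(n1 + n2) -> int)
    k (A1 : 'M[R]_(m1, n1)) A2 A3 (A4 : 'M[R]_(m2, n2)) :
  homog (dm \o lshift m2) (dn \o lshift n2) k A1 ->
  homog (dm \o lshift m2) (dn \o @rshift n1 n2) k A2 ->
  homog (dm \o @rshift m1 m2) (dn \o lshift n2) k A3 ->
  homog (dm \o @rshift m1 m2) (dn \o @rshift n1 n2) k A4 ->
  homog dm dn k (block_mx A1 A2 A3 A4).
Proof.
by move=> h1 h2 h3 h4; rewrite block_mxEh; apply: homog_row; apply: homog_col.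
Qed.

Definition sgn (z : int) : R := (-1) ^+ absz z.

Lemma sgnD (a b : int) : sgn (a + b) = sgn a * sgn b.
Proof.
rewrite /sgn -exprD -signr_odd -[RHS]signr_odd; congr (_ ^+ _).
have : ((absz (a + b)%R + absz a + absz b) %% 2 = 0)%N by lia.
by rewrite modn2 !oddD; case: (odd _); case: (odd _); case: (odd _).
Qed.

Lemma sgn_sqr (a : int) : sgn a * sgn a = 1.
Proof. by rewrite -exprD -signr_odd addnn odd_double. Qed.

Lemma sgn0 : sgn 0 = 1. Proof. exact: expr0. Qed.

Lemma sgn1 : sgn 1 = -1. Proof. exact: expr1. Qed.

Lemma sgnN1 : sgn (-1) = -1. Proof. exact: expr1. Qed.

Definition sign_mx n (d : 'I_n -> int) : 'M[R]_n := diag_mx (\row_i sgn (d i)).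

Lemma sign_mx_sqr n (d : 'I_n -> int) : sign_mx d *m sign_mx d = 1%:M.
Proof.
apply/matrixP => i j; rewrite mul_diag_mx !mxE.
by case: (eqVneq i j) => [->|] /=; rewrite ?sgn_sqr // !mulr0n mulr0.
Qed.

Lemma homog_sign_mx n (d : 'I_n -> int) : homog d d 0 (sign_mx d).
Proof.
move=> i j; rewrite mxE; case: (eqVneq i j) => [->|] /=; first by rewrite addr0.
by rewrite mulr0n eqxx.
Qed.

Lemma sign_mx_homog m n (dm : 'I_m -> int) (dn : 'I_n -> int) k (A : 'M[R]_(m, n)) :
  homog dm dn k A -> sign_mx dm *m A = sgn k *: (A *m sign_mx dn).
Proof.
move=> hA; apply/matrixP => i j; rewrite mul_diag_mx mul_mx_diag !mxE.
have [->|/hA ->] := eqVneq (A i j) 0; first by rewrite !(mulr0, mul0r).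
by rewrite sgnD mulrAC mulrC [A i j * _]mulrC.
Qed.

End GradedMatrices.

Section Invertible.
Variable R : comPzRingType.

Lemma invertible_mxM n (A B : 'M[R]_n) :
  invertible_mx A -> invertible_mx B -> invertible_mx (A *m B).
Proof.
move=> [A' [AA' A'A]] [B' [BB' B'B]]; exists (B' *m A'); split.
  by rewrite mulmxA -(mulmxA A) BB' mulmx1.
by rewrite mulmxA -(mulmxA B') A'A mulmx1.
Qed.

Lemma invertible_mxN n (A : 'M[R]_n) : invertible_mx A -> invertible_mx (- A).
Proof. by move=> [A' [AA' A'A]]; exists (- A'); rewrite !mulNmx !mulmxN !opprK. Qed.

Lemma invertible_block_lower m n (A : 'M[R]_m) (B : 'M[R]_n) (C : 'M[R]_(n, m)) :
  invertible_mx A -> invertible_mx B -> invertible_mx (block_mx A 0 C B).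
Proof.
move=> [A' [AA' A'A]] [B' [BB' B'B]]; exists (block_mx A' 0 (- (B' *m C *m A')) B').
rewrite !mulmx_block !(mulmx0, mul0mx, addr0, add0r) (scalar_mx_block m n).
rewrite AA' A'A BB' B'B mulmxN !mulmxA BB' mul1mx addrN.
by rewrite mulNmx -(mulmxA _ A') A'A mulmx1 addNr.
Qed.

End Invertible.

Section SComplexes.
Variable R : comPzRingType.
Implicit Types C X Y : cx R.

Lemma split_lshift m n (i : 'I_m) : split (lshift n i) = inl i.
Proof. exact: (unsplitK (inl i)). Qed.

Lemma split_rshift m n (i : 'I_n) : split (rshift m i) = inr i.
Proof. exact: (unsplitK (inr i)). Qed.

Definition Scx C : Prop :=
  [/\ homog (cdeg C) (cdeg C) (-1) (cd C), cd C *m cd C = 0,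
      homog (cdeg C) (cdeg C) 1 (cchi C) & cchi C *m cd C + cd C *m cchi C = 0].

Lemma Scx_toCx (S : Sdata R) : Scomplex S -> Scx (toCx S).
Proof.
case=> hd dd; split => //=.
  apply: homog_block; try exact: homog0; apply: homog_block; try exact: homog0.
  move=> i j; rewrite mxE; case: (eqVneq i j) => [-> _|]; last by rewrite mulr0n eqxx.
  by rewrite /= /Sdegs !(@split_lshift _ 1) split_lshift split_rshift.
rewrite !mulmx_block mul_block_col mul_row_block.
rewrite !(mul0mx, mulmx0, mul1mx, mulmx1, add0r, addr0) col_mx0 row_mx0.
by rewrite !add_block_mx !addr0 addrN !block_mx0.
Qed.

Lemma morph_homog X Y k (f : 'M[R]_(cn Y, cn X)) :
  morph X Y k f -> homog (cdeg Y) (cdeg X) k f.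
Proof. by case. Qed.

Lemma morph_chi X Y k (f : 'M[R]_(cn Y, cn X)) :
  morph X Y k f -> cchi Y *m f = f *m cchi X.
Proof. by case. Qed.

Lemma morph_d X Y k (f : 'M[R]_(cn Y, cn X)) :
  morph X Y k f -> cd Y *m f = f *m cd X.
Proof. by case=> _ _ /subr0_eq. Qed.

Lemma morph_mul (X Y Z : cx R) k l (f : 'M[R]_(cn Z, cn Y)) (g : 'M[R]_(cn Y, cn X)) :
  morph Y Z k f -> morph X Y l g -> morph X Z (l + k) (f *m g).
Proof.
move=> mf mg; split; first exact: homogM (morph_homog mf) (morph_homog mg).
  by rewrite mulmxA (morph_chi mf) -!mulmxA (morph_chi mg).
by rewrite mulmxA (morph_d mf) -!mulmxA (morph_d mg) subrr.
Qed.

Definition deg_proj n (d : 'I_n -> int) (t : int) : 'M[R]_n :=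
  diag_mx (\row_i (d i == t)%:R).

Lemma homog0_deg_proj m n (dm : 'I_m -> int) (dn : 'I_n -> int) (A : 'M[R]_(m, n)) :
  homog dm dn 0 A <-> forall t, deg_proj dm t *m A = A *m deg_proj dn t.
Proof.
split=> [hA t|hA i j nz].
  apply/matrixP => i j; rewrite mul_diag_mx mul_mx_diag !mxE.
  by have [->|/hA ->] := eqVneq (A i j) 0; rewrite ?mulr0 ?mul0r // addr0 mulrC.
move/matrixP/(_ i j): (hA (dm i)).
rewrite mul_diag_mx mul_mx_diag !mxE eqxx mul1r addr0.
by have [//|_ Aij0] := eqVneq (dn j) (dm i); move: nz; rewrite Aij0 mulr0 eqxx.
Qed.

(* Degree-0 maps are those commuting with the projections [deg_proj], and this
   property passes to inverses. *)
Lemma morph_inv X Y (f : 'M[R]_(cn Y, cn X)) (f' : 'M[R]_(cn X, cn Y)) :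
  morph X Y 0 f -> f *m f' = 1%:M -> f' *m f = 1%:M -> morph Y X 0 f'.
Proof.
move=> [hf cf /subr0_eq df] ff' f'f.
have conj_inv (u : 'M[R]_(cn X)) (v : 'M[R]_(cn Y)) :
    v *m f = f *m u -> u *m f' = f' *m v.
  by move=> e; rewrite -[u *m f']mul1mx -f'f -mulmxA (mulmxA f) -e -mulmxA ff' mulmx1.
split; last by rewrite (conj_inv _ _ df) subrr.
  by apply/homog0_deg_proj => t; apply: conj_inv; move/homog0_deg_proj: hf.
exact: conj_inv.
Qed.

Definition shtpc X Y (f g : 'M[R]_(cn Y, cn X)) : Prop := exists K, shtpy X Y f g K.

Lemma shtpc_sym X Y (f g : 'M[R]_(cn Y, cn X)) : shtpc X Y f g -> shtpc X Y g f.
Proof.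
case=> K [hK cK dK]; exists (- K); split; first exact: homogN.
  by rewrite mulmxN mulNmx -opprD cK oppr0.
by rewrite mulmxN mulNmx -opprD dK opprB.
Qed.

Lemma shtpc_trans X Y (f g h : 'M[R]_(cn Y, cn X)) :
  shtpc X Y f g -> shtpc X Y g h -> shtpc X Y f h.
Proof.
case=> K [hK cK dK] [K' [hK' cK' dK']]; exists (K + K'); split.
- exact: homogD.
- by rewrite mulmxDr mulmxDl addrACA cK cK' addr0.
- by rewrite mulmxDr mulmxDl addrACA dK dK' addrA subrK.
Qed.

Lemma shtpc_mull X Y Z (u : 'M[R]_(cn Z, cn Y)) (f g : 'M[R]_(cn Y, cn X)) :
  morph Y Z 0 u -> shtpc X Y f g -> shtpc X Z (u *m f) (u *m g).
Proof.
move=> mu [K [hK cK dK]]; exists (u *m K); split.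
- by have := homogM (morph_homog mu) hK; rewrite addr0.
- by rewrite mulmxA (morph_chi mu) -!mulmxA -mulmxDr cK mulmx0.
- by rewrite mulmxA (morph_d mu) -!mulmxA -mulmxDr dK mulmxBr.
Qed.

Lemma shtpc_mulr X Y Z (f g : 'M[R]_(cn Z, cn Y)) (u : 'M[R]_(cn Y, cn X)) :
  morph X Y 0 u -> shtpc Y Z f g -> shtpc X Z (f *m u) (g *m u).
Proof.
move=> mu [K [hK cK dK]]; exists (K *m u); split.
- by have := homogM hK (morph_homog mu); rewrite add0r.
- by rewrite -mulmxA -(morph_chi mu) !mulmxA -mulmxDl cK mul0mx.
- by rewrite -mulmxA -(morph_d mu) !mulmxA -mulmxDl dK mulmxBl.
Qed.

Definition shtpc_auto C (f : 'M[R]_(cn C)) : Prop :=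
  exists p, [/\ morph C C 0 p, invertible_mx p & shtpc C C f p].

Lemma sheq_shtpc_auto X Y (f : 'M[R]_(cn Y, cn X)) (g : 'M[R]_(cn X, cn Y)) :
  morph X Y 0 f -> morph Y X 0 g -> shtpc_auto X (g *m f) -> shtpc_auto Y (f *m g) ->
  sheq X Y.
Proof.
move=> mf mg [p [mp [p' [pp' p'p]] gf_p]] [q [mq [q' [qq' q'q]] fg_q]].
have mp' := morph_inv mp pp' p'p; have mq' := morph_inv mq qq' q'q.
pose gl := p' *m g; pose gr := g *m q'.
have mgl : morph Y X 0 gl by have := morph_mul mp' mg; rewrite addr0.
have mgr : morph Y X 0 gr by have := morph_mul mg mq'; rewrite addr0.
have mfgl : morph Y Y 0 (f *m gl) by have := morph_mul mf mgl; rewrite addr0.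
have gl_f : shtpc X X (gl *m f) 1%:M.
  by rewrite -p'p /gl -mulmxA; apply: shtpc_mull.
have f_gr : shtpc Y Y (f *m gr) 1%:M.
  by rewrite -qq' /gr mulmxA; apply: shtpc_mulr.
exists f, gl; split=> //.
(* f gl ~ f gl f gr ~ f gr ~ 1 *)
apply: (shtpc_trans (g := f *m gl *m (f *m gr))).
  by rewrite -{1}[f *m gl]mulmx1; apply/shtpc_sym/shtpc_mull.
apply: shtpc_trans f_gr.
have := shtpc_mulr mgr (shtpc_mull mf gl_f).
by rewrite mulmx1 !mulmxA.
Qed.

Lemma morphB X Y k (f g : 'M[R]_(cn Y, cn X)) :
  morph X Y k f -> morph X Y k g -> morph X Y k (f - g).
Proof.
move=> [hf cf /subr0_eq df] [hg cg /subr0_eq dg]; split; first exact: homogB.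
  by rewrite mulmxBr mulmxBl cf cg.
by rewrite mulmxBr mulmxBl df dg subrr.
Qed.

Lemma Scx_negcx C : Scx C -> Scx (negcx C).
Proof.
case=> hd dd hc cd0; split=> /=; first exact: homogN.
- by rewrite mulNmx mulmxN opprK.
- exact: homogN.
- by rewrite !mulNmx !mulmxN !opprK.
Qed.

Lemma morph_boundary X Y (N : 'M[R]_(cn Y, cn X)) :
  Scx X -> Scx Y -> homog (cdeg Y) (cdeg X) 1 N -> cchi Y *m N + N *m cchi X = 0 ->
  morph X Y 0 (cd Y *m N + N *m cd X).
Proof.
move=> [hdX ddX _ cdX] [hdY ddY _ cdY] hN /addr0_eqN cN.
split.
- apply: homogD; [have := homogM hdY hN | have := homogM hN hdX].
  + by rewrite subrr.
  + by rewrite addNr.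
- rewrite mulmxDr mulmxDl !mulmxA (addr0_eqN cdY) cN !mulNmx -!mulmxA (addr0_eqN cdX).
  by rewrite cN !mulmxN !opprK !mulmxA.
- by rewrite mulmxDr mulmxDl !mulmxA ddY -!mulmxA ddX mulmx0 mul0mx add0r addr0 subrr.
Qed.

Lemma htpc_iso_boundary C (f N : 'M[R]_(cn C)) :
  Scx C -> morph C (negcx C) 0 f ->
  homog (cdeg C) (cdeg C) 1 N -> - cchi C *m N + N *m cchi C = 0 ->
  invertible_mx (f - (- cd C *m N + N *m cd C)) -> htpc_iso C f.
Proof.
move=> sC mf hN cN inv; split=> //; exists (f - (- cd C *m N + N *m cd C)), N.
split=> //; first exact/morphB/morph_boundary/cN/hN/Scx_negcx.
by split=> //=; rewrite opprB addrCA subrr addr0.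
Qed.

Definition sign_involution C (e : 'M[R]_(cn C)) : Prop :=
  [/\ homog (cdeg C) (cdeg C) 0 e, e *m e = 1%:M,
      e *m cd C = - (cd C *m e) & e *m cchi C = - (cchi C *m e)].

Lemma sign_involution_sign_mx C : Scx C -> sign_involution C (sign_mx R (cdeg C)).
Proof.
case=> hd _ hc _; split; first exact: homog_sign_mx; first exact: sign_mx_sqr.
  by rewrite (sign_mx_homog hd) sgnN1 scaleN1r.
by rewrite (sign_mx_homog hc) sgn1 scaleN1r.
Qed.

Lemma mulmxA_anticomm m n (c e : 'M[R]_m) (M : 'M[R]_(m, n)) :
  e *m c = - (c *m e) -> c *m (e *m M) = e *m (- c *m M).
Proof. by move=> ec; rewrite mulmxA -[c *m e]opprK -ec !mulNmx mulmxN mulmxA. Qed.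

Lemma morph_twist X Y (e : 'M[R]_(cn Y)) (f : 'M[R]_(cn Y, cn X)) :
  sign_involution Y e -> morph X (negcx Y) 0 f -> morph X Y 0 (e *m f).
Proof.
move=> [he _ ed ec] [hf /= cf /subr0_eq /= df]; split.
- by have := homogM he hf; rewrite addr0.
- by rewrite mulmxA_anticomm // cf mulmxA.
- by rewrite mulmxA_anticomm // df mulmxA subrr.
Qed.

Lemma shtpc_auto_twist C (e f : 'M[R]_(cn C)) :
  sign_involution C e -> htpc_iso C f -> shtpc_auto C (e *m f).
Proof.
move=> se [_ [g [K [mg inv_g [hK /= cK dK]]]]].
have [he ee ed ec] := se.
exists (e *m g); split; first exact: morph_twist.
  by apply: invertible_mxM => //; exists e.
exists (e *m K); split.
- by have := homogM he hK; rewrite addr0.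
- by rewrite mulmxA_anticomm // -mulmxA -mulmxDr cK mulmx0.
- by rewrite mulmxA_anticomm // -mulmxA -mulmxDr dK mulmxBr.
Qed.

(* The cone of [mu] with an arbitrary grading [dC]: [cone Y Z k mu] and
   [shift1 (cone Y Z k mu)] are instances. *)
Definition gcone Y Z (dC : 'I_(cn Y + cn Z) -> int) (mu : 'M[R]_(cn Z, cn Y)) : cx R :=
  Cx (cn Y + cn Z) dC (block_mx (- cd Y) 0 mu (cd Z))
     (block_mx (- cchi Y) 0 0 (cchi Z)).

Lemma Scx_gcone Y Z {dC : 'I_(cn Y + cn Z) -> int} (mu : 'M[R]_(cn Z, cn Y)) k
    {tY tZ : int} :
  Scx Y -> Scx Z -> morph Y Z k mu ->
  (forall i, dC (lshift (cn Z) i) = cdeg Y i + tY) ->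
  (forall j, dC (rshift (cn Y) j) = cdeg Z j + tZ) -> k + tZ = tY - 1 ->
  Scx (gcone Y Z dC mu).
Proof.
move=> [hdY ddY hcY cdY] [hdZ ddZ hcZ cdZ] mmu dCl dCr hk.
split=> /=.
- apply: homog_block; [apply: homogN | exact: homog0 | |].
  + by apply: homog_conv hdY => i j /=; rewrite !dCl => ->; lia.
  + by apply: homog_conv (morph_homog mmu) => i j /=; rewrite dCr dCl => ->; lia.
  + by apply: homog_conv hdZ => i j /=; rewrite !dCr => ->; lia.
- rewrite mulmx_block !(mulmx0, mul0mx, addr0, add0r) mulmxN mulNmx opprK ddY ddZ.
  by rewrite (morph_d mmu) mulmxN addNr block_mx0.
- apply: homog_block; [apply: homogN | exact: homog0 | exact: homog0 |].
  + by apply: homog_conv hcY => i j /=; rewrite !dCl => ->; lia.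
  + by apply: homog_conv hcZ => i j /=; rewrite !dCr => ->; lia.
- rewrite !mulmx_block !(mulmx0, mul0mx, addr0, add0r) !mulmxN !mulNmx !opprK.
  by rewrite add_block_mx cdY cdZ (morph_chi mmu) addrN addr0 block_mx0.
Qed.

End SComplexes.

(* With (X, Y, Z) = (C_i, C_(i-1), C_(i-2)) of the statement: a, mu, b are
   lambda_i, lambda_(i-1), lambda_(i-2) and KX, KY, KZ are K_i, K_(i-1), K_(i-2). *)
Section ExactTriangle.
Variable R : comPzRingType.
Variables X Y Z : cx R.
Variables p k q : int.
Variables (a : 'M[R]_(cn Y, cn X)) (mu : 'M[R]_(cn Z, cn Y)) (b : 'M[R]_(cn X, cn Z)).
Variables (KX : 'M[R]_(cn Z, cn X)) (KY : 'M[R]_(cn X, cn Y)) (KZ : 'M[R]_(cn Y, cn Z)).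
Hypotheses (sX : Scx X) (sY : Scx Y) (sZ : Scx Z).
Hypotheses (ma : morph X Y p a) (mmu : morph Y Z k mu) (mb : morph Z X q b).
Hypotheses (hKX : homog (cdeg Z) (cdeg X) (p + k + 1) KX)
           (hKY : homog (cdeg X) (cdeg Y) (k + q + 1) KY)
           (hKZ : homog (cdeg Y) (cdeg Z) (q + p + 1) KZ).
Hypotheses (cKX : cchi Z *m KX + KX *m cchi X = 0)
           (cKY : cchi X *m KY + KY *m cchi Y = 0)
           (cKZ : cchi Y *m KZ + KZ *m cchi Z = 0).
Hypotheses (dKX : cd Z *m KX + KX *m cd X + mu *m a = 0)
           (dKY : cd X *m KY + KY *m cd Y + b *m mu = 0)
           (dKZ : cd Y *m KZ + KZ *m cd Z + a *m b = 0).
Hypotheses (isoX : htpc_iso X (b *m KX - KY *m a))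
           (isoY : htpc_iso Y (a *m KY - KZ *m mu))
           (isoZ : htpc_iso Z (mu *m KZ - KX *m b)).
Hypothesis deg_sum : p + k + q = -1.

Section Grading.
Variable dC : 'I_(cn Y + cn Z) -> int.
Hypotheses (dC_Y : forall i, dC (lshift (cn Z) i) = cdeg Y i - p)
           (dC_Z : forall j, dC (rshift (cn Y) j) = cdeg Z j - (p + k + 1)).

Let C := gcone Y Z dC mu.
Let Phi := sign_mx R dC *m col_mx a KX.
Let Psi := row_mx (- KY) b.

Let Scx_C : Scx C.
Proof. by apply: (Scx_gcone sY sZ mmu dC_Y dC_Z); lia. Qed.

Let morph_col : morph X (negcx C) 0 (col_mx a KX).
Proof.
split=> /=.
- apply: homog_col.
    by apply: homog_conv (morph_homog ma) => i j /=; rewrite dC_Y => ->; lia.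
  by apply: homog_conv hKX => i j /=; rewrite dC_Z => ->; lia.
- rewrite mulNmx mul_block_col !(mul0mx, addr0, add0r) mulNmx (morph_chi ma).
  by rewrite (addr0_eqN cKX) mul_col_mx opp_col_mx !opprK.
- have dKX' : mu *m a + cd Z *m KX + KX *m cd X = 0 by rewrite -addrA addrC.
  rewrite mulNmx mul_block_col !(mul0mx, addr0, add0r) mulNmx (morph_d ma).
  by rewrite (addr0_eqN dKX') mul_col_mx opp_col_mx !opprK subrr.
Qed.

Let morph_Phi : morph X C 0 Phi.
Proof. exact: morph_twist (sign_involution_sign_mx Scx_C) morph_col. Qed.

Let morph_Psi : morph C X 0 Psi.
Proof.
split=> /=.
- apply: homog_row; first apply: homogN.
    by apply: homog_conv hKY => i j /=; rewrite dC_Y => ->; lia.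
  by apply: homog_conv (morph_homog mb) => i j /=; rewrite dC_Z => ->; lia.
- rewrite mul_mx_row mul_row_block !(mulmx0, mul0mx, addr0, add0r) mulNmx.
  by rewrite !mulmxN opprK (morph_chi mb) (addr0_eqN cKY) opprK.
- have dKY' : cd X *m KY + (KY *m cd Y + b *m mu) = 0 by rewrite addrA.
  rewrite mul_mx_row mul_row_block !(mulmx0, mul0mx, addr0, add0r) mulNmx.
  rewrite !mulmxN opprK (morph_d mb) (addr0_eqN dKY') opprK.
  by rewrite opp_row_mx add_row_mx !subrr row_mx0.
Qed.

Let shtpc_auto_PsiPhi : shtpc_auto X (Psi *m Phi).
Proof.
have := sign_mx_homog (morph_homog morph_Psi); rewrite sgn0 scale1r => eps_Psi.
rewrite /Phi mulmxA -eps_Psi -mulmxA mul_row_col mulNmx addrC.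
exact: shtpc_auto_twist (sign_involution_sign_mx sX) isoX.
Qed.

Let htpc_iso_col_Psi : htpc_iso C (col_mx a KX *m Psi).
Proof.
have [_ [gy [Hy [_ inv_gy [hHy cHy dHy]]]]] := isoY.
have [_ [gz [Hz [_ inv_gz [hHz cHz dHz]]]]] := isoZ.
move: cHy cHz dHy dHz; rewrite /= !mulNmx => cHy cHz dHy dHz.
apply: (htpc_iso_boundary (C := C) (N := block_mx Hy (- KZ) 0 (- Hz))) => /=.
- exact: Scx_C.
- by have := morph_mul morph_col morph_Psi; rewrite addr0.
- apply: homog_block; [| apply: homogN | exact: homog0 | apply: homogN].
  + by apply: homog_conv hHy => i j /=; rewrite !dC_Y => ->; lia.
  + by apply: homog_conv hKZ => i j /=; rewrite dC_Y dC_Z => ->; lia.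
  + by apply: homog_conv hHz => i j /=; rewrite !dC_Z => ->; lia.
- rewrite opp_block_mx !mulmx_block !(mulmx0, mul0mx, addr0, add0r, oppr0) add_block_mx.
  rewrite !mulmxN !mulNmx !opprK.
  move/addr0_eq: cHy; rewrite opprK => ->; move/addr0_eq: cHz; rewrite opprK => ->.
  by rewrite !subrr -opprD cKZ oppr0 addr0 block_mx0.
rewrite /Psi mul_col_row opp_block_mx !mulmx_block.
rewrite !(mulmx0, mul0mx, addr0, add0r) add_block_mx opp_block_mx add_block_mx.
rewrite !(oppr0, mul0mx, addr0) !mulmxN !mulNmx !opprK.
have -> : - (a *m KY) - (cd Y *m Hy + (- (Hy *m cd Y) - KZ *m mu)) = - gy.
  by rewrite !opprD !opprK (addrA (- (cd Y *m Hy))) dHy addrAC subrK addKr.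
have -> : a *m b - (- (cd Y *m KZ) - KZ *m cd Z) = 0.
  by rewrite !opprD !opprK addrC.
have -> : KX *m b - (mu *m KZ + cd Z *m Hz - Hz *m cd Z) = - gz.
  by rewrite !opprD opprK -(addrA (- _)) dHz (addrA (- (mu *m KZ))) addKr addNKr.
by apply: invertible_block_lower; apply: invertible_mxN.
Qed.

Lemma sheq_gcone : sheq X C.
Proof.
apply: sheq_shtpc_auto morph_Phi morph_Psi shtpc_auto_PsiPhi _.
rewrite /Phi -mulmxA.
exact: shtpc_auto_twist (sign_involution_sign_mx Scx_C) htpc_iso_col_Psi.
Qed.

End Grading.

Lemma sheq_cone : p + k = -1 -> sheq X (cone Y Z k mu).
Proof.
move=> pk; apply: sheq_gcone => [i|j] /=; rewrite ?split_lshift ?split_rshift //; lia.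
Qed.

Lemma sheq_shift1_cone : p + k = 0 -> sheq X (shift1 (cone Y Z k mu)).
Proof.
move=> pk; apply: sheq_gcone => [i|j] /=; rewrite ?split_lshift ?split_rshift //; lia.
Qed.

End ExactTriangle.

Theorem proposition2p24 (R : comPzRingType) (S0 S1 S2 : Sdata R)
  (l0 : 'M[R]_(cn (toCx S2), cn (toCx S0)))
  (l1 : 'M[R]_(cn (toCx S0), cn (toCx S1)))
  (l2 : 'M[R]_(cn (toCx S1), cn (toCx S2)))
  (K0 : 'M[R]_(cn (toCx S1), cn (toCx S0)))
  (K1 : 'M[R]_(cn (toCx S2), cn (toCx S1)))
  (K2 : 'M[R]_(cn (toCx S0), cn (toCx S2))) :
  Scomplex S0 -> Scomplex S1 -> Scomplex S2 ->
  morph (toCx S0) (toCx S2) 0 l0 ->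
  morph (toCx S1) (toCx S0) (-1) l1 ->
  morph (toCx S2) (toCx S1) 0 l2 ->
  homog (cdeg (toCx S1)) (cdeg (toCx S0)) 1 K0 ->
  homog (cdeg (toCx S2)) (cdeg (toCx S1)) 0 K1 ->
  homog (cdeg (toCx S0)) (cdeg (toCx S2)) 0 K2 ->
  cchi (toCx S1) *m K0 + K0 *m cchi (toCx S0) = 0 ->
  cchi (toCx S2) *m K1 + K1 *m cchi (toCx S1) = 0 ->
  cchi (toCx S0) *m K2 + K2 *m cchi (toCx S2) = 0 ->
  cd (toCx S1) *m K0 + K0 *m cd (toCx S0) + l2 *m l0 = 0 ->
  cd (toCx S2) *m K1 + K1 *m cd (toCx S1) + l0 *m l1 = 0 ->
  cd (toCx S0) *m K2 + K2 *m cd (toCx S2) + l1 *m l2 = 0 ->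
  htpc_iso (toCx S0) (l1 *m K0 - K2 *m l0) ->
  htpc_iso (toCx S1) (l2 *m K1 - K0 *m l1) ->
  htpc_iso (toCx S2) (l0 *m K2 - K1 *m l2) ->
  [/\ sheq (toCx S0) (shift1 (cone (toCx S2) (toCx S1) 0 l2)),
      sheq (toCx S1) (cone (toCx S0) (toCx S2) 0 l0) &
      sheq (toCx S2) (cone (toCx S1) (toCx S0) (-1) l1)].
Proof.
move=> /Scx_toCx s0 /Scx_toCx s1 /Scx_toCx s2 m0 m1 m2 h0 h1 h2 c0 c1 c2 d0 d1 d2.
move=> i0 i1 i2.
split.
- exact: sheq_shift1_cone s0 s2 s1 m0 m2 m1 h0 h2 h1 c0 c2 c1 d0 d2 d1 i0 i2 i1
    erefl erefl.
- exact: sheq_cone s1 s0 s2 m1 m0 m2 h1 h0 h2 c1 c0 c2 d1 d0 d2 i1 i0 i2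
    erefl erefl.
- exact: sheq_cone s2 s1 s0 m2 m1 m0 h2 h1 h0 c2 c1 c0 d2 d1 d0 i2 i1 i0
    erefl erefl.
Qed.
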